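(* Let $(I,\preccurlyeq)$ be a directed set, let $S(\Lambda^{\preccurlyeq})$ be a direct spectrum over $(I,\preccurlyeq)$ with sets $\lambda_0(i)$, transports $\lambda^{\preccurlyeq}_{ij}$ and Bishop spaces $\mathcal F_i=(\lambda_0(i),F_i)$, let $(J,e,\mathrm{cof}_J)$ be a cofinal subset of $I$, and let $S(\Lambda^{\preccurlyeq})\circ e$ be the relative spectrum of $S(\Lambda^{\preccurlyeq})$ to $J$, with Bishop spaces $\mathcal F_j:=\mathcal F_{e(j)}$, $j\in J$. Then $\underset{\to}{\mathrm{Lim}}\,\mathcal F_j\simeq\underset{\to}{\mathrm{Lim}}\,\mathcal F_i$, where the left side is the direct limit of $S(\Lambda^{\preccurlyeq})\circ e$ over $J$ and the right side the direct limit of $S(\Lambda^{\preccurlyeq})$ over $I$.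
   Context: Work in Bishop-style constructive mathematics (no choice principles). Each set has its own equality; functions respect it; $e$ is an embedding if $e(j)=e(j')$ implies $j=j'$. A directed set $(I,\preccurlyeq)$: a set with a reflexive transitive relation respecting equality, any two elements having a common upper bound. A direct family over $(I,\preccurlyeq)$: sets $\lambda_0(i)$ and functions $\lambda^{\preccurlyeq}_{ij}:\lambda_0(i)\to\lambda_0(j)$ for $i\preccurlyeq j$ with $\lambda^{\preccurlyeq}_{ii}=\mathrm{id}$ and $\lambda^{\preccurlyeq}_{ik}=\lambda^{\preccurlyeq}_{jk}\circ\lambda^{\preccurlyeq}_{ij}$. Bishop spaces: a Bishop topology on $X$ is a set $F$ of functions $X\to\mathbb R$ containing constants, closed under addition, under composition with functions $\mathbb R\to\mathbb R$ uniformly continuous on every $[-n,n]$, and under uniform limits; $\bigvee F_0$ = least Bishop topology containing $F_0$; a Bishop morphism $(X,F)\to(Y,G)$ is a function $h$ with $g\circ h\in F$ for all $g\in G$; a Bishop isomorphism is a bijective Bishop morphism whose inverse is a Bishop morphism; $\simeq$ means Bishop isomorphic. A direct spectrum: a direct family with Bishop topologies $F_i$ on $\lambda_0(i)$ such that each transport is a Bishop morphism. Cofinal subset $(J,e,\mathrm{cof}_J)$: a set $J$, an embedding $e:J\to I$ (with $j\preccurlyeq j'$ iff $e(j)\preccurlyeq e(j')$) and a function $\mathrm{cof}_J:I\to J$ with $\mathrm{cof}_J(e(j))=j$ for all $j$, $i\preccurlyeq i'\Rightarrow\mathrm{cof}_J(i)\preccurlyeq\mathrm{cof}_J(i')$,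 and $i\preccurlyeq e(\mathrm{cof}_J(i))$ for all $i$ (then $(J,\preccurlyeq)$ is directed). The relative spectrum $S(\Lambda^{\preccurlyeq})\circ e$ over $(J,\preccurlyeq)$ has sets $\lambda_0(e(j))$, transports $\lambda^{\preccurlyeq}_{e(j)e(j')}$ for $j\preccurlyeq j'$, and topologies $F_{e(j)}$. Direct limit of a direct spectrum over $(I,\preccurlyeq)$: $\sum^{\preccurlyeq}\lambda_0(i)$ = pairs $(i,x)$ with $(i,x)=(j,y)$ iff there is $k\succcurlyeq i,j$ with $\lambda^{\preccurlyeq}_{ik}(x)=\lambda^{\preccurlyeq}_{jk}(y)$; $\prod^{\succcurlyeq}F_i$ = dependent assignments $\Theta$ with $\Theta_i\in F_i$ and $\Theta_i=\Theta_j\circ\lambda^{\preccurlyeq}_{ij}$ for $i\preccurlyeq j$; $\underset{\to}{\mathrm{Lim}}\,\lambda_0(i)$ = equivalence classes $\mathrm{eql}_0(i,x)$ under this equality; $\mathrm{eql}_0f_\Theta(\mathrm{eql}_0(i,x)):=\Theta_i(x)$; $\underset{\to}{\mathrm{Lim}}\,\mathcal F_i=(\underset{\to}{\mathrm{Lim}}\,\lambda_0(i),\bigvee\{\mathrm{eql}_0f_\Theta:\Theta\in\prod^{\succcurlyeq}F_i\})$. *)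

From Stdlib Require Import Reals.
Open Scope R_scope.

(** Bishop sets are modelled as a carrier type together with an equality
    relation (required to be an equivalence where the paper says "set"). *)

Definition is_equivalence {X : Type} (eqX : X -> X -> Prop) : Prop :=
  (forall x, eqX x x) /\
  (forall x y, eqX x y -> eqX y x) /\
  (forall x y z, eqX x y -> eqX y z -> eqX x z).

Definition ext_fun {X : Type} (eqX : X -> X -> Prop) (f : X -> R) : Prop :=
  forall x y, eqX x y -> f x = f y.

Definition ucont_bounded (phi : R -> R) : Prop :=
  forall (n : nat) (eps : R), 0 < eps ->
    exists delta, 0 < delta /\
      forall x y, Rabs x <= INR n -> Rabs y <= INR n ->
        Rabs (x - y) < delta -> Rabs (phi x - phi y) < eps.

Definition uniform_limit {X : Type} (fs : nat -> X -> R) (f : X -> R) : Prop :=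
  forall eps, 0 < eps -> exists N : nat, forall n, (N <= n)%nat ->
    forall x, Rabs (fs n x - f x) <= eps.

Definition bishop_topology {X : Type} (eqX : X -> X -> Prop)
    (F : (X -> R) -> Prop) : Prop :=
  (forall f, F f -> ext_fun eqX f) /\
  (forall a : R, F (fun _ => a)) /\
  (forall f g, F f -> F g -> F (fun x => f x + g x)) /\
  (forall f phi, F f -> ucont_bounded phi -> F (fun x => phi (f x))) /\
  (forall (fs : nat -> X -> R) (f : X -> R),
      (forall n, F (fs n)) -> uniform_limit fs f -> F f).

Definition bishop_gen {X : Type} (eqX : X -> X -> Prop)
    (F0 : (X -> R) -> Prop) (f : X -> R) : Prop :=
  forall F : (X -> R) -> Prop, bishop_topology eqX F ->
    (forall g, F0 g -> F g) -> F f.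

Definition bishop_morphism {X Y : Type}
    (eqX : X -> X -> Prop) (F : (X -> R) -> Prop)
    (eqY : Y -> Y -> Prop) (G : (Y -> R) -> Prop) (h : X -> Y) : Prop :=
  (forall x x', eqX x x' -> eqY (h x) (h x')) /\
  (forall g, G g -> F (fun x => g (h x))).

Definition bishop_iso {X Y : Type}
    (eqX : X -> X -> Prop) (F : (X -> R) -> Prop)
    (eqY : Y -> Y -> Prop) (G : (Y -> R) -> Prop) : Prop :=
  exists (h : X -> Y) (k : Y -> X),
    bishop_morphism eqX F eqY G h /\
    bishop_morphism eqY G eqX F k /\
    (forall x, eqX (k (h x)) x) /\
    (forall y, eqY (h (k y)) y).

Definition is_directed {I : Type} (eqI : I -> I -> Prop)
    (le : I -> I -> Prop) : Prop :=
  is_equivalence eqI /\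
  (forall i i' j j', eqI i i' -> eqI j j' -> le i j -> le i' j') /\
  (forall i, le i i) /\
  (forall i j k, le i j -> le j k -> le i k) /\
  (forall i j, exists k, le i k /\ le j k).

Definition is_direct_spectrum {I : Type} (le : I -> I -> Prop)
    (lam0 : I -> Type) (eqlam : forall i, lam0 i -> lam0 i -> Prop)
    (lam : forall i j, le i j -> lam0 i -> lam0 j)
    (F : forall i, (lam0 i -> R) -> Prop) : Prop :=
  (forall i, is_equivalence (eqlam i)) /\
  (forall i j (p : le i j) x x', eqlam i x x' ->
      eqlam j (lam i j p x) (lam i j p x')) /\
  (forall i j (p q : le i j) x, eqlam j (lam i j p x) (lam i j q x)) /\
  (forall i (p : le i i) x, eqlam i (lam i i p x) x) /\
  (forall i j k (p : le i j) (q : le j k) (r : le i k) x,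
      eqlam k (lam i k r x) (lam j k q (lam i j p x))) /\
  (forall i, bishop_topology (eqlam i) (F i)) /\
  (forall i j (p : le i j),
      bishop_morphism (eqlam i) (F i) (eqlam j) (F j) (lam i j p)).

Definition is_cofinal {I J : Type} (eqI : I -> I -> Prop) (le : I -> I -> Prop)
    (eqJ : J -> J -> Prop) (e : J -> I) (cof : I -> J) : Prop :=
  is_equivalence eqJ /\
  (forall j j', eqJ j j' -> eqI (e j) (e j')) /\
  (forall j j', eqI (e j) (e j') -> eqJ j j') /\
  (forall i i', eqI i i' -> eqJ (cof i) (cof i')) /\
  (forall j, eqJ (cof (e j)) j) /\
  (forall i i', le i i' -> le (e (cof i)) (e (cof i'))) /\
  (forall i, le i (e (cof i))).

Definition le_rel {I J : Type} (le : I -> I -> Prop) (e : J -> I) : J -> J -> Prop :=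
  fun j j' => le (e j) (e j').

Section DirectLimit.
Context {I : Type} (le : I -> I -> Prop) (lam0 : I -> Type)
  (eqlam : forall i, lam0 i -> lam0 i -> Prop)
  (lam : forall i j, le i j -> lam0 i -> lam0 j)
  (F : forall i, (lam0 i -> R) -> Prop).

Definition lim_eq (a b : {i : I & lam0 i}) : Prop :=
  exists k (p : le (projT1 a) k) (q : le (projT1 b) k),
    eqlam k (lam _ k p (projT2 a)) (lam _ k q (projT2 b)).

Definition prod_assign (Theta : forall i, lam0 i -> R) : Prop :=
  (forall i, F i (Theta i)) /\
  (forall i j (p : le i j) x, Theta i x = Theta j (lam i j p x)).

Definition eql0f (Theta : forall i, lam0 i -> R) (a : {i : I & lam0 i}) : R :=
  Theta (projT1 a) (projT2 a).

Definition lim_top (f : {i : I & lam0 i} -> R) : Prop :=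
  bishop_gen lim_eq
    (fun g => exists Theta, prod_assign Theta /\ forall a, g a = eql0f Theta a) f.
End DirectLimit.

(* The inclusion (j, x) |-> (e j, x) and the retraction
   (i, x) |-> (cof i, lam_{i, e (cof i)} x) are mutually inverse on the direct
   limits, since both round trips only transport an element forward.  The
   direct-limit topologies are generated by the functions eql0f Theta, and a
   map into a generated topology is a morphism as soon as it pulls the
   generators back into the source topology.  Restriction along e turns an
   assignment in prod F_i into one in prod F_{e j}; conversely an assignment
   Theta over J extends to I by Theta_i := Theta_{cof i} o lam_{i, e (cof i)}.
   Pulling eql0f back along the inclusion, resp. the retraction, gives exactly
   these restricted, resp. extended, generators. *)
From Stdlib Require Import Reals Lra.
Open Scope R_scope.

Lemma ext_fun_uniform_limit {X : Type} (eqX : X -> X -> Prop)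
    (fs : nat -> X -> R) (f : X -> R) :
  (forall n, ext_fun eqX (fs n)) -> uniform_limit fs f -> ext_fun eqX f.
Proof.
  intros Hfs Hlim x y Hxy.
  assert (Hclose : forall eps, 0 < eps -> Rabs (f x - f y) <= 2 * eps).
  { intros eps Heps.
    destruct (Hlim eps Heps) as [N HN].
    pose proof (HN N (le_n N) x) as Hx; pose proof (HN N (le_n N) y) as Hy.
    rewrite (Hfs N x y Hxy), Rabs_minus_sym in Hx.
    replace (f x - f y) with ((f x - fs N y) + (fs N y - f y)) by ring.
    eapply Rle_trans; [apply Rabs_triang | lra]. }
  destruct (Req_dec (f x) (f y)) as [Heq | Hneq]; [exact Heq | exfalso].
  assert (Hpos : 0 < Rabs (f x - f y)) by (apply Rabs_pos_lt; lra).
  specialize (Hclose (Rabs (f x - f y) / 4)); lra.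
Qed.

Lemma ext_fun_bishop_topology {X : Type} (eqX : X -> X -> Prop) :
  bishop_topology eqX (ext_fun eqX).
Proof.
  split; [| split; [| split; [| split]]].
  - intros f Hf; exact Hf.
  - intros a x y _; reflexivity.
  - intros f g Hf Hg x y Hxy; rewrite (Hf x y Hxy), (Hg x y Hxy); reflexivity.
  - intros f phi Hf _ x y Hxy; rewrite (Hf x y Hxy); reflexivity.
  - exact (ext_fun_uniform_limit eqX).
Qed.

(* A constant sequence converges uniformly to any pointwise equal function. *)
Lemma bishop_topology_pointwise {X : Type} (eqX : X -> X -> Prop)
    (F : (X -> R) -> Prop) (f g : X -> R) :
  bishop_topology eqX F -> F f -> (forall x, f x = g x) -> F g.
Proof.
  intros [_ [_ [_ [_ Flim]]]] Hf Hfg.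
  apply (Flim (fun _ => f)); [intros _; exact Hf |].
  intros eps Heps; exists 0%nat; intros n _ x.
  rewrite Hfg, Rminus_diag, Rabs_R0; lra.
Qed.

Lemma bishop_topology_preimage {X Y : Type} (eqX : X -> X -> Prop)
    (G : (X -> R) -> Prop) (eqY : Y -> Y -> Prop) (h : X -> Y) :
  bishop_topology eqX G ->
  bishop_topology eqY (fun g => ext_fun eqY g /\ G (fun x => g (h x))).
Proof.
  intros [_ [Gcst [Gadd [Gcomp Glim]]]].
  destruct (ext_fun_bishop_topology eqY) as [_ [Ecst [Eadd [Ecomp Elim]]]].
  split; [| split; [| split; [| split]]].
  - intros g [Hg _]; exact Hg.
  - intros a; split; [apply Ecst | apply Gcst].
  - intros f g [Hf Hfh] [Hg Hgh]; split; [apply Eadd | apply Gadd]; assumption.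
  - intros f phi [Hf Hfh] Hphi; split; [apply Ecomp | apply Gcomp]; assumption.
  - intros fs f Hfs Hlim; split.
    + apply (Elim fs); [intros n; apply Hfs | exact Hlim].
    + apply (Glim (fun n x => fs n (h x))); [intros n; apply Hfs |].
      intros eps Heps; destruct (Hlim eps Heps) as [N HN].
      exists N; intros n Hn x; apply HN, Hn.
Qed.

Lemma bishop_gen_incl {X : Type} (eqX : X -> X -> Prop)
    (F0 : (X -> R) -> Prop) (g : X -> R) :
  F0 g -> bishop_gen eqX F0 g.
Proof. intros Hg F _ HF0; exact (HF0 g Hg). Qed.

Lemma bishop_gen_topology {X : Type} (eqX : X -> X -> Prop)
    (F0 : (X -> R) -> Prop) :
  (forall g, F0 g -> ext_fun eqX g) -> bishop_topology eqX (bishop_gen eqX F0).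
Proof.
  intros F0_ext; split; [| split; [| split; [| split]]].
  - intros f Hf; exact (Hf _ (ext_fun_bishop_topology eqX) F0_ext).
  - intros a F HF _; apply HF.
  - intros f g Hf Hg F HF HF0; apply HF; [apply Hf | apply Hg]; assumption.
  - intros f phi Hf Hphi F HF HF0; apply HF; [apply Hf |]; assumption.
  - intros fs f Hfs Hlim F HF HF0; apply (proj2 (proj2 (proj2 (proj2 HF))) fs f).
    + intros n; apply Hfs; assumption.
    + exact Hlim.
Qed.

Lemma bishop_morphism_to_gen {X Y : Type} (eqX : X -> X -> Prop)
    (G : (X -> R) -> Prop) (eqY : Y -> Y -> Prop) (F0 : (Y -> R) -> Prop)
    (h : X -> Y) :
  bishop_topology eqX G ->
  (forall g, F0 g -> ext_fun eqY g) ->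
  (forall x x', eqX x x' -> eqY (h x) (h x')) ->
  (forall g, F0 g -> G (fun x => g (h x))) ->
  bishop_morphism eqX G eqY (bishop_gen eqY F0) h.
Proof.
  intros HG F0_ext h_ext HF0; split; [exact h_ext |].
  intros g Hg.
  apply (Hg _ (bishop_topology_preimage eqX G eqY h HG)).
  intros f Hf; split; [apply F0_ext | apply HF0]; exact Hf.
Qed.

Section DirectLimitTopology.
Context {I : Type} (le : I -> I -> Prop) (lam0 : I -> Type)
  (eqlam : forall i, lam0 i -> lam0 i -> Prop)
  (lam : forall i j, le i j -> lam0 i -> lam0 j)
  (F : forall i, (lam0 i -> R) -> Prop).
Hypothesis F_ext : forall i f, F i f -> ext_fun (eqlam i) f.

Lemma lim_generator_ext (g : {i : I & lam0 i} -> R) :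
  (exists Theta, prod_assign le lam0 lam F Theta /\ forall a, g a = eql0f lam0 Theta a) ->
  ext_fun (lim_eq le lam0 eqlam lam) g.
Proof.
  intros [Theta [[HTheta Hcompat] Hg]] [i x] [j y] [k [p [q Hk]]].
  rewrite !Hg; unfold eql0f; simpl.
  rewrite (Hcompat i k p x), (Hcompat j k q y).
  exact (F_ext k _ (HTheta k) _ _ Hk).
Qed.

Lemma lim_top_bishop_topology :
  bishop_topology (lim_eq le lam0 eqlam lam) (lim_top le lam0 eqlam lam F).
Proof. apply bishop_gen_topology, lim_generator_ext. Qed.

Lemma lim_top_eql0f (Theta : forall i, lam0 i -> R) :
  prod_assign le lam0 lam F Theta ->
  lim_top le lam0 eqlam lam F (eql0f lam0 Theta).
Proof.
  intros HTheta; apply bishop_gen_incl; exists Theta; split; [exact HTheta | reflexivity].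
Qed.

Lemma bishop_morphism_to_lim_top {X : Type} (eqX : X -> X -> Prop)
    (G : (X -> R) -> Prop) (h : X -> {i : I & lam0 i}) :
  bishop_topology eqX G ->
  (forall x x', eqX x x' -> lim_eq le lam0 eqlam lam (h x) (h x')) ->
  (forall Theta, prod_assign le lam0 lam F Theta ->
     G (fun x => eql0f lam0 Theta (h x))) ->
  bishop_morphism eqX G (lim_eq le lam0 eqlam lam) (lim_top le lam0 eqlam lam F) h.
Proof.
  intros HG h_ext Hpull; apply bishop_morphism_to_gen; [exact HG | | exact h_ext |].
  - exact lim_generator_ext.
  - intros g [Theta [HTheta Hg]].
    apply (bishop_topology_pointwise eqX G _ _ HG (Hpull Theta HTheta)).
    intros x; symmetry; apply Hg.
Qed.

End DirectLimitTopology.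

Section CofinalSubspectrum.
Context {I J : Type} (le : I -> I -> Prop) (lam0 : I -> Type)
  (eqlam : forall i, lam0 i -> lam0 i -> Prop)
  (lam : forall i j, le i j -> lam0 i -> lam0 j)
  (F : forall i, (lam0 i -> R) -> Prop) (e : J -> I) (cof : I -> J).

Hypothesis le_trans : forall i j k, le i j -> le j k -> le i k.
Hypothesis le_refl : forall i, le i i.
Hypothesis eqlam_equiv : forall i, is_equivalence (eqlam i).
Hypothesis lam_id : forall i (p : le i i) x, eqlam i (lam i i p x) x.
Hypothesis lam_comp : forall i j k (p : le i j) (q : le j k) (r : le i k) x,
  eqlam k (lam i k r x) (lam j k q (lam i j p x)).
Hypothesis F_top : forall i, bishop_topology (eqlam i) (F i).
Hypothesis lam_morphism : forall i j (p : le i j),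
  bishop_morphism (eqlam i) (F i) (eqlam j) (F j) (lam i j p).
Hypothesis cof_mono : forall i i', le i i' -> le (e (cof i)) (e (cof i')).
Hypothesis le_cof : forall i, le i (e (cof i)).

Local Notation lamJ0 := (fun j => lam0 (e j)).
Local Notation eqlamJ := (fun j => eqlam (e j)).
Local Notation lamJ := (fun j j' (p : le_rel le e j j') => lam (e j) (e j') p).
Local Notation FJ := (fun j => F (e j)).
Local Notation limI_eq := (lim_eq le lam0 eqlam lam).
Local Notation limI_top := (lim_top le lam0 eqlam lam F).
Local Notation limJ_eq := (lim_eq (le_rel le e) lamJ0 eqlamJ lamJ).
Local Notation limJ_top := (lim_top (le_rel le e) lamJ0 eqlamJ lamJ FJ).

Lemma eqlam_sym i x y : eqlam i x y -> eqlam i y x.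
Proof. apply (eqlam_equiv i). Qed.

Lemma eqlam_trans i x y z : eqlam i x y -> eqlam i y z -> eqlam i x z.
Proof. apply (eqlam_equiv i). Qed.

Lemma F_ext i f : F i f -> ext_fun (eqlam i) f.
Proof. apply (F_top i). Qed.

Lemma lam_path_indep i j j' k (p : le i j) (q : le j k) (p' : le i j') (q' : le j' k) x :
  eqlam k (lam j k q (lam i j p x)) (lam j' k q' (lam i j' p' x)).
Proof.
  apply eqlam_trans with (lam i k (le_trans _ _ _ p q) x).
  - apply eqlam_sym, lam_comp.
  - apply lam_comp.
Qed.

Definition cofinal_incl (a : {j : J & lam0 (e j)}) : {i : I & lam0 i} :=
  existT lam0 (e (projT1 a)) (projT2 a).

Definition cofinal_retract (a : {i : I & lam0 i}) : {j : J & lam0 (e j)} :=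
  existT lamJ0 (cof (projT1 a)) (lam _ _ (le_cof (projT1 a)) (projT2 a)).

Lemma cofinal_incl_ext a b : limJ_eq a b -> limI_eq (cofinal_incl a) (cofinal_incl b).
Proof. intros [k [p [q Hk]]]; exists (e k), p, q; exact Hk. Qed.

Lemma cofinal_retract_ext a b : limI_eq a b -> limJ_eq (cofinal_retract a) (cofinal_retract b).
Proof.
  destruct a as [i x], b as [i' y]; intros [m [p [q Hm]]]; simpl in *.
  exists (cof m), (cof_mono i m p), (cof_mono i' m q); simpl.
  apply eqlam_trans with (lam m (e (cof m)) (le_cof m) (lam i m p x));
    [apply lam_path_indep |].
  apply eqlam_trans with (lam m (e (cof m)) (le_cof m) (lam i' m q y));
    [apply (proj1 (lam_morphism m _ (le_cof m))), Hm | apply lam_path_indep].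
Qed.

Lemma cofinal_retract_incl a : limJ_eq (cofinal_retract (cofinal_incl a)) a.
Proof.
  destruct a as [j x]; exists (cof (e j)), (le_refl _), (le_cof (e j)); apply lam_id.
Qed.

Lemma cofinal_incl_retract a : limI_eq (cofinal_incl (cofinal_retract a)) a.
Proof.
  destruct a as [i x]; exists (e (cof i)), (le_refl _), (le_cof i); apply lam_id.
Qed.

Lemma prod_assign_restrict (Theta : forall i, lam0 i -> R) :
  prod_assign le lam0 lam F Theta ->
  prod_assign (le_rel le e) lamJ0 lamJ FJ (fun j => Theta (e j)).
Proof.
  intros [HTheta Hcompat]; split; [intros j; apply HTheta | intros j j' p x; apply Hcompat].
Qed.

Lemma prod_assign_extend (Theta : forall j, lam0 (e j) -> R) :
  prod_assign (le_rel le e) lamJ0 lamJ FJ Theta ->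
  prod_assign le lam0 lam F (fun i x => Theta (cof i) (lam i _ (le_cof i) x)).
Proof.
  intros [HTheta Hcompat]; split.
  - intros i; apply (proj2 (lam_morphism i _ (le_cof i))), HTheta.
  - intros i j p x; simpl.
    rewrite (Hcompat (cof i) (cof j) (cof_mono i j p)).
    apply (F_ext _ _ (HTheta (cof j))), lam_path_indep.
Qed.

Lemma cofinal_incl_morphism :
  bishop_morphism limJ_eq limJ_top limI_eq limI_top cofinal_incl.
Proof.
  apply bishop_morphism_to_lim_top.
  - exact F_ext.
  - apply lim_top_bishop_topology; intros j; apply F_ext.
  - exact cofinal_incl_ext.
  - intros Theta HTheta; exact (lim_top_eql0f _ _ _ _ _ _ (prod_assign_restrict Theta HTheta)).
Qed.

Lemma cofinal_retract_morphism :
  bishop_morphism limI_eq limI_top limJ_eq limJ_top cofinal_retract.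
Proof.
  apply bishop_morphism_to_lim_top.
  - intros j; apply F_ext.
  - apply lim_top_bishop_topology, F_ext.
  - exact cofinal_retract_ext.
  - intros Theta HTheta; exact (lim_top_eql0f _ _ _ _ _ _ (prod_assign_extend Theta HTheta)).
Qed.

Lemma direct_limit_cofinal_iso : bishop_iso limJ_eq limJ_top limI_eq limI_top.
Proof.
  exists cofinal_incl, cofinal_retract.
  split; [exact cofinal_incl_morphism |].
  split; [exact cofinal_retract_morphism |].
  split; [exact cofinal_retract_incl | exact cofinal_incl_retract].
Qed.

End CofinalSubspectrum.

Theorem theorem9p12
  (I : Type) (eqI : I -> I -> Prop) (le : I -> I -> Prop)
  (lam0 : I -> Type) (eqlam : forall i, lam0 i -> lam0 i -> Prop)
  (lam : forall i j, le i j -> lam0 i -> lam0 j)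
  (F : forall i, (lam0 i -> R) -> Prop)
  (J : Type) (eqJ : J -> J -> Prop) (e : J -> I) (cof : I -> J) :
  is_directed eqI le ->
  is_direct_spectrum le lam0 eqlam lam F ->
  is_cofinal eqI le eqJ e cof ->
  bishop_iso
    (lim_eq (le_rel le e) (fun j => lam0 (e j)) (fun j => eqlam (e j))
       (fun j j' (p : le_rel le e j j') => lam (e j) (e j') p))
    (lim_top (le_rel le e) (fun j => lam0 (e j)) (fun j => eqlam (e j))
       (fun j j' (p : le_rel le e j j') => lam (e j) (e j') p)
       (fun j => F (e j)))
    (lim_eq le lam0 eqlam lam)
    (lim_top le lam0 eqlam lam F).
Proof.
  intros [_ [_ [le_refl [le_trans _]]]]
         [eqlam_equiv [_ [_ [lam_id [lam_comp [F_top lam_morphism]]]]]]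
         [_ [_ [_ [_ [_ [cof_mono le_cof]]]]]].
  apply (direct_limit_cofinal_iso le lam0 eqlam lam F e cof); assumption.
Qed.
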